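(* Under the setting and Assumptions A1–A4 described in the context, let $\{\mathcal{X}^t\}$ be generated by the TNNR iteration, set $\delta_t=\mu^t\theta_1^t/2$ and $H_{\delta_{t+1}}(\mathcal{X}^{t+1},\mathcal{X}^t)=F(\mathcal{X}^{t+1})+\delta_{t+1}\|\mathcal{X}^{t+1}-\mathcal{X}^t\|^2$. Then (i) for all $t\ge 0$, $H_{\delta_{t+1}}(\mathcal{X}^{t+1},\mathcal{X}^t)-H_{\delta_t}(\mathcal{X}^t,\mathcal{X}^{t-1})\le-\frac{\varepsilon L_f}{2}\|\mathcal{X}^{t+1}-\mathcal{X}^t\|^2$; in particular the sequence $H_{\delta_{t+1}}(\mathcal{X}^{t+1},\mathcal{X}^t)$ is monotonically nonincreasing; (ii) $\lim_{t\to\infty}(\mathcal{X}^t-\mathcal{X}^{t+1})=0$.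
   Context: Tensors: fix positive integers $n_1,n_2,n_3$, let $r=\min\{n_1,n_2\}$. For $\mathcal{X}\in\mathbb{R}^{n_1\times n_2\times n_3}$, $\|\mathcal{X}\|$ is the Frobenius norm (square root of the sum of squared entries) and $\langle\cdot,\cdot\rangle$ the entrywise inner product. $\bar{\mathcal{X}}\in\mathbb{C}^{n_1\times n_2\times n_3}$ is the (unnormalized) discrete Fourier transform of $\mathcal{X}$ along the third mode, $\bar{\mathcal{X}}(i,j,:)=F_{n_3}\mathcal{X}(i,j,:)$ with $F_{n_3}$ the $n_3\times n_3$ DFT matrix $(\omega^{(p-1)(q-1)})_{p,q}$, $\omega=e^{-2\pi\sqrt{-1}/n_3}$; $\bar X^{(k)}$ is its $k$-th frontal slice, and $\sigma_i^k(\mathcal{X})$ denotes the $i$-th largest singular value of $\bar X^{(k)}$, $i\in[r]$, $k\in[n_3]$. Assumption A1: $\rho:[0,\infty)\to[0,\infty)$ is differentiable and concave, $\rho'$ is Lipschitz continuous with constant $L_g$, and $\rho'(t)>0$ for all $t\ge 0$. Assumption A2: $f:\mathbb{R}^{n_1\times n_2\times n_3}\to[0,\infty)$ is continuously differentiable and $\nabla f$ is $L_f$-Lipschitz ($L_f>0$). Objective: for $\lambda>0$, $F(\mathcal{X})=\lambda\sum_{k=1}^{n_3}\rho\Big(\sum_{i=1}^r\rho\big(\rho(\sigma_i^k(\mathcal{X}))\big)\Big)+f(\mathcal{X})$. Assumption A3: $F$ is coercive ($F(\mathcal{X})\to+\infty$ as $\|\mathcal{X}\|\to\infty$) and bounded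 below. Weighted function: for weights $\alpha=(\alpha_k)_{k\in[n_3]}$, $\beta=(\beta_i^k)$, $\|\mathcal{X}\|_{\rho_\alpha^\beta}=\sum_{k=1}^{n_3}\sum_{i=1}^r\alpha_k\beta_i^k\rho(\sigma_i^k(\mathcal{X}))$. TNNR iteration: start from $\mathcal{X}^0$ and set $\mathcal{X}^{-1}=\mathcal{X}^0$; for every $t\ge 0$ the weights are $\alpha_k^t=\rho'\big(\sum_{i=1}^r\rho(\rho(\sigma_i^k(\mathcal{X}^t)))\big)$, $\beta_i^{k,t}=\rho'\big(\rho(\sigma_i^k(\mathcal{X}^t))\big)$, and $\mathcal{Y}^t=\mathcal{X}^t+\theta_1^t(\mathcal{X}^t-\mathcal{X}^{t-1})$, $\mathcal{Z}^t=\mathcal{X}^t+\theta_2^t(\mathcal{X}^t-\mathcal{X}^{t-1})$, $\mathcal{X}^{t+1}\in\arg\min_{\mathcal{X}}\ \lambda\|\mathcal{X}\|_{\rho_{\alpha^t}^{\beta^t}}+\langle\mathcal{X}-\mathcal{Y}^t,\nabla f(\mathcal{Z}^t)\rangle+\frac{\mu^t}{2}\|\mathcal{X}-\mathcal{Y}^t\|^2$ (a global minimizer). Assumption A4: for some fixed $\varepsilon\in(0,1)$ and all $t$: $\theta_1^t\in[0,(1-\varepsilon)/2)$, $\theta_2^t\in[0,1/2]$, $(\mu^t)$ is nonincreasing and $\mu^0\ge\mu^t\ge\max\{\theta_2^tL_f/\theta_1^t,\ (1-\theta_2^t)L_f/(1-\theta_1^t-\theta_1^{t+1}-\varepsilon)\}$.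 *)

From HB Require Import structures.
From mathcomp Require Import all_boot all_order all_algebra.
From mathcomp Require Import all_classical all_reals all_analysis.
From mathcomp Require Import complex.
From mathcomp Require Import sesquilinear spectral.

Set Implicit Arguments.
Unset Strict Implicit.
Unset Printing Implicit Defensive.

Import Order.TTheory GRing.Theory Num.Theory.
Import numFieldNormedType.Exports.
Local Open Scope classical_set_scope.
Local Open Scope ring_scope.
Local Open Scope sesquilinear_scope.

Section Tensors.
Variables (R : realType) (n1 n2 n3 : nat).

Definition tensor := {ffun 'I_n1 * 'I_n2 * 'I_n3 -> R}.

Definition tdot (X Y : tensor) : R :=
  \sum_(i < n1) \sum_(j < n2) \sum_(k < n3) X (i, j, k) * Y (i, j, k).
Definition tnorm (X : tensor) : R := Num.sqrt (tdot X X).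

Definition omega : R[i] :=
  (cos (2 * pi / n3%:R) -i* sin (2 * pi / n3%:R))%C.

(* unnormalised DFT along the third mode (0-based indices):
   Xbar(i,j,p) = sum_q omega^(p q) X(i,j,q) *)
Definition tdft (X : tensor) (i : 'I_n1) (j : 'I_n2) (p : 'I_n3) : R[i] :=
  \sum_(q < n3) omega ^+ (p * q) * ((X (i, j, q))%:C)%C.

Definition fslice (X : tensor) (k : 'I_n3) : 'M[R[i]]_(n1, n2) :=
  \matrix_(i, j) tdft X i j k.

Definition r := minn n1 n2.

(* rectangular n1 x n2 "diagonal" matrix with diagonal s_0, ..., s_(r-1) *)
Definition rect_diag (s : {ffun 'I_r -> R}) : 'M[R[i]]_(n1, n2) :=
  \matrix_(i, j)
    if (i == j :> nat) then
      (if @insub nat (fun m => m < r)%N _ (nat_of_ord i) is Some k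
       then ((s k)%:C)%C else 0)
    else 0.

Definition is_svals (A : 'M[R[i]]_(n1, n2)) (s : {ffun 'I_r -> R}) : Prop :=
  [/\ (forall i, 0 <= s i),
      (forall i j : 'I_r, (i <= j)%N -> s j <= s i) &
      exists (U : 'M[R[i]]_n1) (V : 'M[R[i]]_n2),
        [/\ U \is unitarymx, V \is unitarymx &
            A = U *m rect_diag s *m (V ^t*)]].

(* the singular values of A (uniquely determined by the SVD) *)
Definition svals (A : 'M[R[i]]_(n1, n2)) : {ffun 'I_r -> R} :=
  xget 0 [set s | is_svals A s].

Definition sigma (X : tensor) (i : 'I_r) (k : 'I_n3) : R :=
  svals (fslice X k) i.

Definition wfun (rho : R -> R) (alpha : 'I_n3 -> R) (beta : 'I_n3 -> 'I_r -> R)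
    (X : tensor) : R :=
  \sum_(k < n3) \sum_(i < r) alpha k * beta k i * rho (sigma X i k).

Definition objF (lambda : R) (rho : R -> R) (f : tensor -> R) (X : tensor) : R :=
  lambda * \sum_(k < n3) rho (\sum_(i < r) rho (rho (sigma X i k))) + f X.

Definition alphaw (rho drho : R -> R) (X : tensor) (k : 'I_n3) : R :=
  drho (\sum_(i < r) rho (rho (sigma X i k))).
Definition betaw (rho drho : R -> R) (X : tensor) (k : 'I_n3) (i : 'I_r) : R :=
  drho (rho (sigma X i k)).

Definition assumption_A1 (rho drho : R -> R) (Lg : R) : Prop :=
  [/\ (forall t, 0 <= t -> 0 <= rho t),
      (forall t, 0 <= t ->
        (fun h => h^-1 * (rho (t + h) - rho t))
          @ within [set h | h != 0 /\ 0 <= t + h] (nbhs 0) --> drho t),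
      (forall x y a, 0 <= x -> 0 <= y -> 0 <= a -> a <= 1 ->
         a * rho x + (1 - a) * rho y <= rho (a * x + (1 - a) * y)),
      (forall s t, 0 <= s -> 0 <= t -> `|drho s - drho t| <= Lg * `|s - t|) &
      (forall t, 0 <= t -> 0 < drho t)].

Definition assumption_A2 (f : tensor -> R) (gradf : tensor -> tensor) (Lf : R)
  : Prop :=
  [/\ (forall X, 0 <= f X),
      (forall X (e : R), 0 < e -> exists2 d : R, 0 < d & forall Y,
         tnorm (Y - X) < d ->
         `|f Y - f X - tdot (gradf X) (Y - X)| <= e * tnorm (Y - X)),
      (forall X (e : R), 0 < e -> exists2 d : R, 0 < d & forall Y,
         tnorm (Y - X) < d -> tnorm (gradf Y - gradf X) < e),
      (forall X Y, tnorm (gradf X - gradf Y) <= Lf * tnorm (X - Y)) &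
      0 < Lf].

Definition assumption_A3 (F : tensor -> R) : Prop :=
  (forall M : R, exists R0 : R, forall X, R0 < tnorm X -> M < F X) /\
  (exists c : R, forall X, c <= F X).

(* Assumption A4 (mu^t >= theta_2^t L_f / theta_1^t read as
   mu^t theta_1^t >= theta_2^t L_f) *)
Definition assumption_A4 (eps Lf : R) (theta1 theta2 mu : nat -> R) : Prop :=
  [/\ 0 < eps, eps < 1,
      (forall t, 0 <= theta1 t /\ theta1 t < (1 - eps) / 2),
      (forall t, 0 <= theta2 t /\ theta2 t <= 1 / 2) &
      [/\ (forall t, mu t.+1 <= mu t),
          (forall t, mu t <= mu 0%N),
          (forall t, theta2 t * Lf <= mu t * theta1 t) &
          (forall t, (1 - theta2 t) * Lf / (1 - theta1 t - theta1 t.+1 - eps)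
                     <= mu t)]].

(* X^(t-1), with the convention X^(-1) = X^0 *)
Definition Xprev (X : nat -> tensor) (t : nat) : tensor :=
  if t is t'.+1 then X t' else X 0%N.

Definition tnnr_iter (lambda : R) (rho drho : R -> R) (gradf : tensor -> tensor)
    (theta1 theta2 mu : nat -> R) (X : nat -> tensor) : Prop :=
  forall t : nat,
    let Y := X t + theta1 t *: (X t - Xprev X t) in
    let Z := X t + theta2 t *: (X t - Xprev X t) in
    let G := fun W : tensor =>
      lambda * wfun rho (alphaw rho drho (X t)) (betaw rho drho (X t)) W
      + tdot (W - Y) (gradf Z) + mu t / 2 * tnorm (W - Y) ^+ 2 in
    forall W, G (X t.+1) <= G W.

Definition Hval (lambda : R) (rho : R -> R) (f : tensor -> R)
    (theta1 mu : nat -> R) (X : nat -> tensor) (t : nat) : R :=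
  objF lambda rho f (X t) + mu t * theta1 t / 2 * tnorm (X t - Xprev X t) ^+ 2.

End Tensors.

(* The objective is majorized by the TNNR surrogate: rho is concave, so it lies below its
   tangents, and applying this to the outer and the middle rho gives
   F(X') - F(X) <= lambda (w(X') - w(X)) + f(X') - f(X) for the weights w taken at X.
   Testing the surrogate's minimizer X^{t+1} against X^t, and bounding f from both sides by
   the descent lemma at the extrapolated point Z^t, bounds F(X^{t+1}) - F(X^t) by a quadratic
   form in E = X^{t+1} - X^t and D = X^t - X^{t-1}.  Young's inequality 2<E,D> <= |E|^2 + |D|^2
   and A4 turn this into the decrease H_{t+1} - H_t <= -(eps Lf / 2) |E|^2.  As H_t >= inf F,
   the decreases are summable and X^t - X^{t+1} -> 0. *)

From HB Require Import structures.
From mathcomp Require Import all_boot all_order all_algebra.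
From mathcomp Require Import all_classical all_reals all_analysis.
From mathcomp Require Import complex.
From mathcomp Require Import sesquilinear spectral.
From mathcomp Require Import ring lra.
Import Order.TTheory GRing.Theory Num.Theory.
Import numFieldNormedType.Exports.
Local Open Scope classical_set_scope.
Local Open Scope ring_scope.

Set Implicit Arguments.
Unset Strict Implicit.
Unset Printing Implicit Defensive.

Section TensorInnerProduct.
Variables (R : realType) (n1 n2 n3 : nat).
Implicit Types X Y Z : tensor R n1 n2 n3.

Lemma tdotDZl (a b : R) X Y Z :
  tdot (a *: X + b *: Y) Z = a * tdot X Z + b * tdot Y Z.
Proof.
rewrite /tdot !mulr_sumr -big_split; apply: eq_bigr => i _.
rewrite !mulr_sumr -big_split; apply: eq_bigr => j _.
rewrite !mulr_sumr -big_split; apply: eq_bigr => k _.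
rewrite !ffunE /= /GRing.scale /=; ring.
Qed.

Lemma tdotC X Y : tdot X Y = tdot Y X.
Proof.
rewrite /tdot; apply: eq_bigr => i _; apply: eq_bigr => j _.
by apply: eq_bigr => k _; rewrite mulrC.
Qed.

Lemma tdotZl (a : R) X Y : tdot (a *: X) Y = a * tdot X Y.
Proof. by have := tdotDZl a 0 X X Y; rewrite scale0r addr0 mul0r addr0. Qed.

Lemma tdotZr (a : R) X Y : tdot X (a *: Y) = a * tdot X Y.
Proof. by rewrite tdotC tdotZl tdotC. Qed.

Lemma tdotNl X Y : tdot (- X) Y = - tdot X Y.
Proof. by rewrite -scaleN1r tdotZl mulN1r. Qed.

Lemma tdotBl X Y Z : tdot (X - Y) Z = tdot X Z - tdot Y Z.
Proof. by have := tdotDZl 1 (-1) X Y Z; rewrite scale1r scaleN1r mul1r mulN1r. Qed.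

Lemma tdot_ge0 X : 0 <= tdot X X.
Proof.
rewrite /tdot; apply: sumr_ge0 => i _; apply: sumr_ge0 => j _.
by apply: sumr_ge0 => k _; rewrite -expr2 sqr_ge0.
Qed.

Lemma tdot_sqrDZ (a b : R) X Y : tdot (a *: X + b *: Y) (a *: X + b *: Y) =
  a ^+ 2 * tdot X X + 2 * a * b * tdot X Y + b ^+ 2 * tdot Y Y.
Proof. by rewrite tdotDZl (tdotC X) (tdotC Y) !tdotDZl (tdotC Y X); ring. Qed.

Lemma tdot_le_sqr X Y : 2 * tdot X Y <= tdot X X + tdot Y Y.
Proof.
have := tdot_ge0 (1 *: X + (-1) *: Y); rewrite tdot_sqrDZ; lra.
Qed.

Lemma tdot_le_scale (k : R) X Y : 0 < k -> tdot X X <= k ^+ 2 * tdot Y Y ->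
  tdot X Y <= k * tdot Y Y.
Proof.
move=> k0 XY; have := tdot_ge0 (1 *: X + (- k) *: Y); rewrite tdot_sqrDZ sqrrN.
by move=> expand; rewrite -(ler_pM2l (_ : 0 < 2 * k)) ?pmulr_rgt0 //; nra.
Qed.

Lemma tnorm_ge0 X : 0 <= tnorm X.
Proof. exact: sqrtr_ge0. Qed.

Lemma tnorm_sqr X : tnorm X ^+ 2 = tdot X X.
Proof. by rewrite /tnorm sqr_sqrtr // tdot_ge0. Qed.

Lemma tnormZ (a : R) X : tnorm (a *: X) = `|a| * tnorm X.
Proof.
by rewrite /tnorm tdotZl tdotC tdotZl mulrA -expr2 sqrtrM ?sqr_ge0 // sqrtr_sqr.
Qed.

Lemma tnormN X : tnorm (- X) = tnorm X.
Proof. by rewrite -scaleN1r tnormZ normrN normr1 mul1r. Qed.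

End TensorInnerProduct.

Lemma is_derive_diff_quotient (R : realType) (phi : R -> R) (s l : R) :
  (forall e : R, 0 < e -> exists2 d : R, 0 < d & forall h, h != 0 -> `|h| < d ->
     `|(phi (s + h) - phi s) / h - l| <= e) -> is_derive s 1 phi l.
Proof.
move=> quot.
have cvg_quot : (fun h : R => h^-1 *: ((phi \o shift s) (h *: 1) - phi s)) @ 0^' --> l.
  apply/cvgrPdist_le => e e0; have [d d0 quot_d] := quot e e0.
  apply/nbhs_ballP; exists d => // h /=; rewrite /ball /= sub0r normrN => hd h0.
  rewrite -[h%:A]/(h *: 1) /GRing.scale /= mulr1 (addrC h) distrC mulrC.
  exact: quot_d.
by apply: DeriveDef; [apply/cvg_ex; exists l | exact: cvg_lim cvg_quot].
Qed.

Section LipschitzGradient.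
Variables (R : realType) (n1 n2 n3 : nat).
Variables (f : tensor R n1 n2 n3 -> R) (gradf : tensor R n1 n2 n3 -> tensor R n1 n2 n3).
Variable Lf : R.
Hypothesis gradf_frechet : forall X (e : R), 0 < e -> exists2 d : R, 0 < d &
  forall Y, tnorm (Y - X) < d ->
    `|f Y - f X - tdot (gradf X) (Y - X)| <= e * tnorm (Y - X).
Hypothesis gradf_lipschitz : forall X Y,
  tnorm (gradf X - gradf Y) <= Lf * tnorm (X - Y).
Hypothesis Lf_gt0 : 0 < Lf.

Lemma is_derive_line X D s :
  is_derive s (1 : R) (fun s => f (X + s *: D)) (tdot (gradf (X + s *: D)) D).
Proof.
apply: is_derive_diff_quotient => e e0.
set P := X + s *: D; set nD := tnorm D.
have nD0 : 0 <= nD := tnorm_ge0 D.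
have e1 : 0 < e / (nD + 1) by rewrite divr_gt0 //; lra.
have [d d0 frechetP] := gradf_frechet P e1.
exists (d / (nD + 1)); first by rewrite divr_gt0 //; lra.
move=> h h0; rewrite ltr_pdivlMr; last lra.
move=> hd; have h_gt0 : 0 < `|h| by rewrite normr_gt0.
have -> : X + (s + h) *: D = P + h *: D by rewrite /P scalerDl addrA.
have := frechetP (P + h *: D).
rewrite addrC addKr tnormZ tdotC tdotZl (tdotC D) -/nD => /(_ ltac:(nra)) bound.
have -> : (f (P + h *: D) - f P) / h - tdot (gradf P) D
        = (f (P + h *: D) - f P - h * tdot (gradf P) D) / h by field.
rewrite normrM normfV ler_pdivrMr //; apply: (le_trans bound).
rewrite mulrCA [e * `|h|]mulrC ler_pM2l // mulrAC ler_pdivrMr; nra.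
Qed.

Lemma descent_upper X Y :
  f Y <= f X + tdot (gradf X) (Y - X) + Lf / 2 * tdot (Y - X) (Y - X).
Proof.
set D := Y - X; set t0 := tdot (gradf X) D; set qD := tdot D D.
pose phi s := f (X + s *: D) - t0 * s - Lf / 2 * qD * s ^+ 2.
have dphi s : is_derive s (1 : R) phi (tdot (gradf (X + s *: D)) D - t0 - Lf * qD * s).
  have -> : phi = (fun s => f (X + s *: D)) - t0 \*: id - (Lf / 2 * qD) \*: id ^+ 2.
    by apply/funext => r; rewrite /phi !fctE.
  apply: is_derive_eq; first exact: is_deriveB (is_deriveB (is_derive_line X D s) _) _.
  by rewrite /= expr1; congr (_ - _ - _); rewrite /GRing.scale /= ?mulr1 //; field.
have dphi_le0 s : 0 < s -> tdot (gradf (X + s *: D)) D - t0 - Lf * qD * s <= 0.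
  move=> s0; set a := gradf (X + s *: D) - gradf X.
  have a_lip : tnorm a <= Lf * s * tnorm D.
    have := gradf_lipschitz (X + s *: D) X.
    by rewrite [X + _ - X]addrC addKr tnormZ gtr0_norm // mulrA.
  have : tdot a a <= (Lf * s) ^+ 2 * qD.
    by rewrite -tnorm_sqr /qD -tnorm_sqr exprMn; have := tnorm_ge0 a; nra.
  move/tdot_le_scale => /(_ (mulr_gt0 Lf_gt0 s0)).
  by rewrite /a tdotBl -/t0 -/qD => ?; nra.
have : phi 1 <= phi 0.
  apply: (@ler0_derive1_le_cc R phi 0 1); rewrite ?in_itv /= ?ler01 ?lexx //.
  - move=> s; rewrite in_itv /= => /andP [s0 _].
    by rewrite derive1E; case: (dphi s) => _ ->; rewrite dphi_le0.
  - by apply: derivable_within_continuous => s _; case: (dphi s).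
rewrite /phi scale1r scale0r addr0 [X + D]addrC subrK; lra.
Qed.
End LipschitzGradient.

Section DescentLemma.
Variables (R : realType) (n1 n2 n3 : nat).
Variables (f : tensor R n1 n2 n3 -> R) (gradf : tensor R n1 n2 n3 -> tensor R n1 n2 n3).
Variable Lf : R.
Hypothesis A2 : assumption_A2 f gradf Lf.

Lemma A2_Lf_gt0 : 0 < Lf.
Proof. by case: A2. Qed.

Lemma A2_descent_upper X Y :
  f Y <= f X + tdot (gradf X) (Y - X) + Lf / 2 * tdot (Y - X) (Y - X).
Proof. by case: A2 => _ frechet _ lip Lf0; exact: descent_upper. Qed.

Lemma A2_descent_lower X Y :
  f X + tdot (gradf X) (Y - X) - Lf / 2 * tdot (Y - X) (Y - X) <= f Y.
Proof.
case: A2 => _ frechet _ lip Lf0.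
have negf_frechet Z (e : R) : 0 < e -> exists2 d : R, 0 < d & forall W,
    tnorm (W - Z) < d -> `|- f W - - f Z - tdot (- gradf Z) (W - Z)| <= e * tnorm (W - Z).
  move=> /(frechet Z e) [d d0 near]; exists d => // W /near.
  by rewrite tdotNl -!opprD normrN.
have neggradf_lip Z W : tnorm (- gradf Z - - gradf W) <= Lf * tnorm (Z - W).
  by rewrite -opprD tnormN.
have := descent_upper negf_frechet neggradf_lip Lf0 X Y.
rewrite tdotNl; lra.
Qed.
End DescentLemma.

Section ConcaveMajorant.
Variables (R : realType) (rho drho : R -> R).
Hypothesis rho_right_derive : forall t, 0 <= t ->
  (fun h => h^-1 * (rho (t + h) - rho t))
    @ within [set h | h != 0 /\ 0 <= t + h] (nbhs 0) --> drho t.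
Hypothesis rho_concave : forall x y a, 0 <= x -> 0 <= y -> 0 <= a -> a <= 1 ->
  a * rho x + (1 - a) * rho y <= rho (a * x + (1 - a) * y).
Hypothesis rho_ge0 : forall t, 0 <= t -> 0 <= rho t.
Hypothesis drho_ge0 : forall t, 0 <= t -> 0 <= drho t.

Lemma concave_le_tangent x y : 0 <= x -> 0 <= y -> rho x <= rho y + drho y * (x - y).
Proof.
move=> x0 y0; have [->|xy] := eqVneq x y; first by rewrite subrr mulr0 addr0.
have dxy_gt0 : 0 < `|x - y| by rewrite normr_gt0 subr_eq0.
apply/ler_addgt0Pr => e e0.
have [d d0 near_y] : exists2 d : R, 0 < d & forall h, `|h| < d -> h != 0 -> 0 <= y + h ->
    `|drho y - h^-1 * (rho (y + h) - rho y)| < e / `|x - y|.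
  have /cvgrPdist_lt /(_ (e / `|x - y|) (divr_gt0 e0 dxy_gt0)) := rho_right_derive y0.
  move=> /nbhs_ballP [d d0 ball_d]; exists d => // h hd h0 yh.
  by apply: ball_d; rewrite /ball /= ?sub0r ?normrN.
(* Step from y by h = s (x - y) with s in ]0, 1]: y + h stays in [0, +oo), and concavity
   bounds the difference quotient at h by the slope of the chord from y to x. *)
set s := Num.min 1 (d / (2 * `|x - y|)).
have s_gt0 : 0 < s by rewrite lt_min ltr01 divr_gt0 ?mulr_gt0.
have s_le1 : s <= 1 by rewrite ge_min lexx.
have sd : s * `|x - y| < d.
  have : s <= d / (2 * `|x - y|) by rewrite ge_min lexx orbT.
  by rewrite ler_pdivlMr ?mulr_gt0 //; lra.
set h := s * (x - y).
have h0 : h != 0 by rewrite mulf_neq0 ?(gt_eqF s_gt0) ?subr_eq0.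
have yh : y + h = s * x + (1 - s) * y by rewrite /h; ring.
have chord : s * (rho x - rho y) <= rho (y + h) - rho y.
  by rewrite yh; have := rho_concave x0 y0 (ltW s_gt0) s_le1; lra.
have yh_ge0 : 0 <= y + h.
  by rewrite yh; apply: addr_ge0; apply: mulr_ge0; lra.
have := near_y h; rewrite /h normrM (gtr0_norm s_gt0) => /(_ sd h0 yh_ge0).
set q := h^-1 * _ => q_near.
have secant : rho x - rho y <= (x - y) * q.
  rewrite -(ler_pM2l s_gt0) mulrA -/h (_ : h * q = rho (y + h) - rho y) //.
  by rewrite /q mulrA divff // mul1r.
have : `|(x - y) * (drho y - q)| < e by rewrite normrM mulrC -ltr_pdivlMr.
rewrite ltr_norml => /andP [near_q _]; rewrite mulrBr [drho y * _]mulrC in near_q *.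
lra.
Qed.

Lemma rho_sum_rho2_majorant (m : nat) (a b : 'I_m -> R) :
  (forall i, 0 <= a i) -> (forall i, 0 <= b i) ->
  rho (\sum_i rho (rho (a i))) - rho (\sum_i rho (rho (b i))) <=
  drho (\sum_i rho (rho (b i))) * \sum_i drho (rho (b i)) * (rho (a i) - rho (b i)).
Proof.
move=> a0 b0; set Sa := \sum_i _; set Sb := \sum_i _.
have rho2_ge0 c : 0 <= c -> 0 <= rho (rho c) by move=> c0; apply/rho_ge0/rho_ge0.
have Sa0 : 0 <= Sa by apply: sumr_ge0 => i _; apply: rho2_ge0.
have Sb0 : 0 <= Sb by apply: sumr_ge0 => i _; apply: rho2_ge0.
have inner : Sa - Sb <= \sum_i drho (rho (b i)) * (rho (a i) - rho (b i)).
  rewrite -sumrB; apply: ler_sum => i _.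
  by have := concave_le_tangent (rho_ge0 (a0 i)) (rho_ge0 (b0 i)); lra.
have := ler_wpM2l (drho_ge0 Sb0) inner.
by have := concave_le_tangent Sa0 Sb0; lra.
Qed.

End ConcaveMajorant.

(* Also holds for the junk value [0] that [xget] returns when no SVD exists. *)
Lemma sigma_ge0 (R : realType) (n1 n2 n3 : nat) (X : tensor R n1 n2 n3) i k :
  0 <= sigma X i k.
Proof.
rewrite /sigma /svals; case: xgetP => [s _ [s_ge0 _ _] | _]; first exact: s_ge0.
by rewrite ffunE.
Qed.

Lemma objF_majorant (R : realType) (n1 n2 n3 : nat) (rho drho : R -> R) (Lg : R)
    (f : tensor R n1 n2 n3 -> R) (lambda : R) (X0 X1 : tensor R n1 n2 n3) :
  assumption_A1 rho drho Lg -> 0 <= lambda ->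
  objF lambda rho f X1 - objF lambda rho f X0 <=
  lambda * (wfun rho (alphaw rho drho X0) (betaw rho drho X0) X1
            - wfun rho (alphaw rho drho X0) (betaw rho drho X0) X0) + (f X1 - f X0).
Proof.
case=> rho_ge0 rho_deriv rho_concave _ drho_gt0 lambda0.
set w := wfun _ _ _.
suff major : \sum_k rho (\sum_i rho (rho (sigma X1 i k))) -
             \sum_k rho (\sum_i rho (rho (sigma X0 i k))) <= w X1 - w X0.
  by rewrite /objF; have := ler_wpM2l lambda0 major; lra.
rewrite /w /wfun -!sumrB; apply: ler_sum => k _.
rewrite -sumrB; under [in X in _ <= X]eq_bigr do rewrite -mulrBr -mulrA.
rewrite -mulr_sumr.
apply: (rho_sum_rho2_majorant rho_deriv rho_concave rho_ge0) => [t /drho_gt0/ltW //|i|i].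
  all: exact: sigma_ge0.
Qed.

Lemma sqr_decrease_cvg0 (R : realType) (H u : nat -> R) (c lb : R) :
  0 < c -> (forall t, lb <= H t) -> (forall t, c * u t ^+ 2 <= H t - H t.+1) ->
  u @ \oo --> 0.
Proof.
move=> c0 H_lb decrease.
have H_nincr : nonincreasing_seq H.
  by apply/nonincreasing_seqP => t; have := decrease t; have := sqr_ge0 (u t); nra.
have cvgH : cvgn H.
  by apply: nonincreasing_is_cvgn H_nincr _; exists lb => _ [t _ <-].
have cvg_gap : (fun t => H t - H t.+1) @ \oo --> 0.
  have cvgHS : (fun t => H t.+1) @ \oo --> limn H by rewrite (cvg_shiftS H).
  have : (fun t => H t - H t.+1) @ \oo --> limn H - limn H by exact: cvgB.
  by rewrite subrr.
apply/cvgrPdist_lt => e e0.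
have ce2 : 0 < c * e ^+ 2 by rewrite mulr_gt0 // exprn_gt0.
move/cvgrPdist_lt: cvg_gap => /(_ _ ce2); apply: filterS => t.
rewrite !sub0r !normrN => gap_small.
have := le_lt_trans (decrease t) (le_lt_trans (ler_norm _) gap_small).
rewrite ltr_pM2l // -real_normK ?num_real // => small.
have := normr_ge0 (u t); nra.
Qed.

Section TNNRIteration.
Variables (R : realType) (n1 n2 n3 : nat).
Variables (rho drho : R -> R) (Lg : R).
Variables (f : tensor R n1 n2 n3 -> R) (gradf : tensor R n1 n2 n3 -> tensor R n1 n2 n3).
Variables (Lf lambda eps : R) (theta1 theta2 mu : nat -> R).
Variable X : nat -> tensor R n1 n2 n3.
Hypothesis A1 : assumption_A1 rho drho Lg.
Hypothesis A2 : assumption_A2 f gradf Lf.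
Hypothesis lambda_ge0 : 0 <= lambda.
Hypothesis A4 : assumption_A4 eps Lf theta1 theta2 mu.
Hypothesis iter : tnnr_iter lambda rho drho gradf theta1 theta2 mu X.

Local Notation F := (objF lambda rho f).
(* [dX t.+1] is convertible to [X t.+1 - X t], and [dX 0] is [0]. *)
Local Notation dX t := (X t - Xprev X t).

Lemma objF_step t :
  F (X t.+1) - F (X t) <= (Lf - mu t) / 2 * tdot (dX t.+1) (dX t.+1)
    + (mu t * theta1 t - Lf * theta2 t) * tdot (dX t.+1) (dX t)
    + Lf * theta2 t ^+ 2 * tdot (dX t) (dX t).
Proof.
rewrite /=; set E := X t.+1 - X t; set D := X t - Xprev X t.
have := iter t (X t); rewrite /= -/D.
set th1 := theta1 t; set th2 := theta2 t; set g := gradf _.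
set w := wfun _ _ _.
have eY1 : X t.+1 - (X t + th1 *: D) = 1 *: E + (- th1) *: D.
  by rewrite scale1r scaleNr opprD addrA.
have eY0 : X t - (X t + th1 *: D) = (- th1) *: D by rewrite scaleNr opprD addNKr.
have eZ1 : X t.+1 - (X t + th2 *: D) = 1 *: E + (- th2) *: D.
  by rewrite scale1r scaleNr opprD addrA.
have eZ0 : X t - (X t + th2 *: D) = (- th2) *: D by rewrite scaleNr opprD addNKr.
rewrite eY1 eY0 !tnorm_sqr tdot_sqrDZ !tdotZl !tdotZr tdotDZl => opt.
have := A2_descent_upper A2 (X t + th2 *: D) (X t.+1).
rewrite eZ1 tdot_sqrDZ (tdotC g) tdotDZl -/g => upper.
have := A2_descent_lower A2 (X t + th2 *: D) (X t).
rewrite eZ0 !tdotZl !tdotZr -/g => lower.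
have := objF_majorant f (X t) (X t.+1) A1 lambda_ge0; rewrite -/w => major.
rewrite (tdotC g D) in opt lower; lra.
Qed.

Lemma theta_gap_gt0 t : 0 < 1 - theta1 t - theta1 t.+1 - eps.
Proof.
case: A4 => _ _ theta1_bnd _ _.
by have [_ ?] := theta1_bnd t; have [_ ?] := theta1_bnd t.+1; lra.
Qed.

Lemma mu_gap_bound t :
  (1 - theta2 t) * Lf <= mu t * (1 - theta1 t - theta1 t.+1 - eps).
Proof.
case: A4 => _ _ _ _ [_ _ _ mu_den].
by rewrite -ler_pdivrMr ?mu_den ?theta_gap_gt0.
Qed.

Lemma Lf_le_mu t : Lf <= mu t.
Proof.
case: A4 => eps0 _ theta1_bnd theta2_bnd [_ _ mu_theta1 _].
have [th1S_ge0 _] := theta1_bnd t.+1; have [_ th2_le] := theta2_bnd t.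
have mu_gt0 : 0 < mu t.
  have gap := theta_gap_gt0 t; have := mu_gap_bound t; have := A2_Lf_gt0 A2; nra.
have := mu_gap_bound t; have := mu_theta1 t; nra.
Qed.

Local Notation H := (Hval lambda rho f theta1 mu X).

Lemma Hval_decrease t : H t.+1 - H t <= - (eps * Lf / 2) * tnorm (dX t.+1) ^+ 2.
Proof.
have := objF_step t; rewrite /Hval /= !tnorm_sqr.
set qE := tdot _ _; set d := tdot _ _; set qD := tdot (X t - _) _ => step.
case: A4 => eps0 _ theta1_bnd theta2_bnd [mu_nincr _ mu_theta1 _].
have [th1_ge0 _] := theta1_bnd t; have [th1S_ge0 _] := theta1_bnd t.+1.
have [th2_ge0 th2_le] := theta2_bnd t.
have Lf0 := A2_Lf_gt0 A2; have Lf_mu := Lf_le_mu t.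
have c_ge0 : 0 <= mu t * theta1 t - Lf * theta2 t by have := mu_theta1 t; lra.
have cross := ler_wpM2l c_ge0 (tdot_le_sqr (dX t.+1) (dX t)).
have muS := ler_wpM2r (tdot_ge0 (dX t.+1)) (ler_wpM2r th1S_ge0 (mu_nincr t)).
have coefE : Lf - mu t + mu t * theta1 t - Lf * theta2 t + mu t * theta1 t.+1
             + eps * Lf <= 0.
  by have := mu_gap_bound t; have := ler_wpM2l (ltW eps0) Lf_mu; lra.
have coefD : Lf * theta2 t * (2 * theta2 t - 1) <= 0.
  by rewrite mulr_ge0_le0 ?mulr_ge0 //; lra.
have := mulr_le0_ge0 coefE (tdot_ge0 (dX t.+1)).
have := mulr_le0_ge0 coefD (tdot_ge0 (dX t)).
rewrite -/qE -/qD -/d in cross muS *; nra.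
Qed.

Lemma Hval_ge_lb lb : (forall Y, lb <= F Y) -> forall t, lb <= H t.
Proof.
move=> F_lb t; rewrite /Hval; have := F_lb (X t).
have mu_ge0 := le_trans (ltW (A2_Lf_gt0 A2)) (Lf_le_mu t).
case: A4 => _ _ /(_ t) [th1_ge0 _] _ _.
have := mulr_ge0 (mulr_ge0 mu_ge0 th1_ge0) (sqr_ge0 (tnorm (dX t))); lra.
Qed.

End TNNRIteration.

Theorem lemmaA3 (R : realType) (n1 n2 n3 : nat)
    (rho drho : R -> R) (Lg : R)
    (f : tensor R n1 n2 n3 -> R) (gradf : tensor R n1 n2 n3 -> tensor R n1 n2 n3)
    (Lf lambda eps : R) (theta1 theta2 mu : nat -> R)
    (X : nat -> tensor R n1 n2 n3) :
  assumption_A1 rho drho Lg ->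
  assumption_A2 f gradf Lf ->
  0 < lambda ->
  assumption_A3 (objF lambda rho f) ->
  assumption_A4 eps Lf theta1 theta2 mu ->
  tnnr_iter lambda rho drho gradf theta1 theta2 mu X ->
  (forall t : nat,
     Hval lambda rho f theta1 mu X t.+1 - Hval lambda rho f theta1 mu X t
       <= - (eps * Lf / 2) * tnorm (X t.+1 - X t) ^+ 2) /\
  (forall t : nat, Hval lambda rho f theta1 mu X t.+1 <= Hval lambda rho f theta1 mu X t) /\
  ((fun t => tnorm (X t - X t.+1)) @ \oo --> 0).
Proof.
move=> A1 A2 lambda_gt0 [_ [lb F_lb]] A4 iter.
have decrease := Hval_decrease A1 A2 (ltW lambda_gt0) A4 iter.
have c_gt0 : 0 < eps * Lf / 2.
  by case: A4 => eps0 *; rewrite !mulr_gt0 ?(A2_Lf_gt0 A2).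
split; first exact: decrease.
split=> [t|].
  by have := decrease t; have := sqr_ge0 (tnorm (X t.+1 - X t)); nra.
apply: (sqr_decrease_cvg0 c_gt0 (Hval_ge_lb X A2 A4 F_lb)) => t.
by rewrite -opprB tnormN; have := decrease t; lra.
Qed.
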